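(* Let $\Xi\subseteq\mathbb{R}^d$ be a Polish space with Borel $\sigma$-algebra, equipped with a norm $\|\cdot\|$, and let $\boldsymbol{\xi}_1,\boldsymbol{\xi}_2,\dots$ be independent $\Xi$-valued random variables, $\boldsymbol{\xi}_i$ having distribution $\mathbb{P}_i$. Let $\rho:\mathbb{R}_+\to\mathbb{R}_+$ with $\rho(0)=0$ satisfy $W(\mathbb{P}_i,\mathbb{P}_{i+k})\le\rho(k)$ for all $i\ge1$, $k\ge0$. Let $\mathcal{X}\subseteq\mathbb{R}^n$, $g:\mathbb{R}^n\times\mathbb{R}^d\to\mathbb{R}$ with $g(x,\cdot)$ measurable for every $x$, $N$ a positive integer, and $r_1,\dots,r_N>0$. For $i\in[N]$ let $U_{r_i}(\boldsymbol{\xi}_i):=\{u\in\Xi:\|u-\boldsymbol{\xi}_i\|\le r_i\}$. Then for every $x\in\mathcal{X}$ and every $i\in[N]$, $$\mathbb{P}\big(g(x,u)\le0\ \ \forall u\in U_{r_i}(\boldsymbol{\xi}_i)\big)\le\mathbb{P}\big(g(x,\boldsymbol{\xi}_{N+1})\le0\big)+\frac{\rho(N+1-i)}{r_i}.$$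
   Context: The 1-Wasserstein distance between probability measures $\mathbb{P},\mathbb{P}'$ on $\Xi$ is $W(\mathbb{P},\mathbb{P}'):=\inf_{\pi\in\Pi(\mathbb{P},\mathbb{P}')}\int_{\Xi\times\Xi}\|\xi-\xi'\|\,\pi(d\xi,d\xi')$, where $\Pi(\mathbb{P},\mathbb{P}')$ is the set of couplings with marginals $\mathbb{P}$ and $\mathbb{P}'$. $[N]=\{1,\dots,N\}$. *)

From HB Require Import structures.
From mathcomp Require Import all_boot all_order all_algebra.
From mathcomp Require Import all_classical all_reals all_analysis.
Set Implicit Arguments. Unset Strict Implicit. Unset Printing Implicit Defensive.
Import Order.TTheory GRing.Theory Num.Theory.
Import numFieldNormedType.Exports.
Local Open Scope classical_set_scope.
Local Open Scope ring_scope.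

(* R^d equipped with its Borel sigma-algebra (generated by the open sets of
   the usual topology of R^d; all norms on R^d induce that topology). *)
Definition Borel (R : realType) (d : nat) := g_sigma_algebraType (@open 'rV[R]_d).

Definition is_norm (R : realType) (d : nat) (nrm : 'rV[R]_d -> R) : Prop :=
  [/\ forall x, nrm x = 0 -> x = 0,
      forall (a : R) x, nrm (a *: x) = `|a| * nrm x &
      forall x y, nrm (x + y) <= nrm x + nrm y].

Definition is_polish (R : realType) (d : nat) (Xi : set 'rV[R]_d) : Prop :=
  exists dist : 'rV[R]_d -> 'rV[R]_d -> R,
  (forall x y, Xi x -> Xi y -> 0 <= dist x y) /\
      (forall x y, Xi x -> Xi y -> (dist x y = 0 <-> x = y)) /\
      (forall x y, Xi x -> Xi y -> dist x y = dist y x) /\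
      (forall x y z, Xi x -> Xi y -> Xi z -> dist x z <= dist x y + dist y z) /\
      (forall A, A `<=` Xi ->
         ((exists O, open O /\ A = O `&` Xi) <->
          (forall x, A x -> exists e : R, 0 < e /\
                      forall y, Xi y -> dist x y < e -> A y))) /\
      (forall u : nat -> 'rV[R]_d, (forall k, Xi (u k)) ->
         (forall e : R, 0 < e -> exists K, forall m k, (K <= m)%N -> (K <= k)%N ->
              dist (u m) (u k) < e) ->
         exists l, Xi l /\ forall e : R, 0 < e -> exists K, forall k, (K <= k)%N ->
              dist (u k) l < e) /\
      (exists D, D `<=` Xi /\ countable D /\
         forall x (e : R), Xi x -> 0 < e -> exists y, D y /\ dist x y < e).

Definition coupling (R : realType) (d : nat)
  (mu nu : set (Borel R d) -> \bar R) (pi : probability (Borel R d * Borel R d)%type R) : Prop :=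
  (forall A : set (Borel R d), measurable A -> pi (A `*` setT) = mu A) /\
  (forall A : set (Borel R d), measurable A -> pi (setT `*` A) = nu A).

Definition wasserstein (R : realType) (d : nat) (nrm : 'rV[R]_d -> R)
  (mu nu : set (Borel R d) -> \bar R) : \bar R :=
  ereal_inf [set (\int[pi]_z (nrm ((z.1 : 'rV[R]_d) - z.2))%:E)%E
            | pi in [set pi | coupling mu nu pi]].

Definition law (dO : measure_display) (Omega : measurableType dO) (R : realType) (d : nat)
  (P : probability Omega R) (X : Omega -> 'rV[R]_d) : set (Borel R d) -> \bar R :=
  fun A => P (X @^-1` A).

Definition mutually_independent (dO : measure_display) (Omega : measurableType dO)
  (R : realType) (d : nat) (P : probability Omega R) (X : nat -> Omega -> 'rV[R]_d) : Prop :=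
  forall (J : seq nat) (B : nat -> set (Borel R d)),
    uniq J -> all (fun j => (0 < j)%N) J -> (forall j, measurable (B j)) ->
    P (\bigcap_(j in [set` J]) (X j @^-1` B j)) = (\prod_(j <- J) P (X j @^-1` B j))%E.

From HB Require Import structures.
From mathcomp Require Import all_boot all_order all_algebra.
From mathcomp Require Import all_classical all_reals all_analysis.
From mathcomp Require Import ring lra.
Import Order.TTheory GRing.Theory Num.Theory.
Import numFieldNormedType.Exports HBNNSimple.
Local Open Scope classical_set_scope.
Local Open Scope ring_scope.

(* Take a coupling pi of the laws of xi_i and xi_(N+1) whose transport cost is within e
   of rho(N+1-i). If the closed r_i-ball around the first coordinate lies in {g x <= 0},
   then either the second coordinate satisfies g x <= 0 or the two coordinates are at
   distance at least r_i; by Markov's inequality the latter has pi-mass at most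
   (rho(N+1-i) + e) / r_i.  The event about xi_i need not be Borel in the value of xi_i,
   so it is enlarged to a closed set of centers described by countably many rational
   balls, at the cost of a null set for the law of xi_(N+1). *)

Section measure_facts.
Context {d} {T : measurableType d} {R : realType} (mu : {measure set T -> \bar R}).

(* No measurability of f is needed: the integral of a nonnegative function is the
   supremum of the integrals of the simple functions below it. *)
Lemma measure_le_integral_lbound (A : set T) (c : R) (f : T -> R) :
  measurable A -> 0 <= c -> (forall x, 0 <= f x) -> (forall x, A x -> c <= f x) ->
  (c%:E * mu A <= \int[mu]_x (f x)%:E)%E.
Proof.
move=> mA c0 f0 Af; rewrite ge0_integralTE => [|x]; last by rewrite lee_fin.
pose h := scale_nnsfun (indic_nnsfun R mA) c0.
rewrite -[X in (_ * X)%E](sintegral_indic mu) -(sintegralrM mu c (indic_nnsfun R mA)).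
apply: ereal_sup_ubound; exists h => // x; rewrite lee_fin.
change (c * \1_A x <= f x); rewrite indicE.
by case: (boolP (x \in A)) => [/set_mem/Af|_]; rewrite ?mulr1 ?mulr0.
Qed.

Lemma countable_bigcup_measure0 (U : countType) (P : set U) (F : U -> set T) :
  (forall i, measurable (F i)) -> (forall i, P i -> mu (F i) = 0) ->
  mu (\bigcup_(i in P) F i) = 0.
Proof.
move=> mF F0; pose G k := if unpickle k is Some i then
  (if i \in P then F i else set0) else set0.
have mG k : measurable (G k) by rewrite /G; case: unpickle => [i|] //; case: ifP.
have -> : \bigcup_(i in P) F i = \bigcup_k G k.
  apply/seteqP; split => [x [i Pi Fx]|x [k _]].
    by exists (pickle i); rewrite // /G pickleK mem_set.
  by rewrite /G; case: unpickle => [i|] //; case: ifPn => // /set_mem Pi Fx; exists i.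
apply/eqP; rewrite -measure_le0.
apply: le_trans (measure_sigma_subadditive _ mG (bigcupT_measurable _ mG) _) _ => //.
rewrite eseries0 // => k _ _; rewrite /G; case: unpickle => [i|]; last exact: measure0.
by case: ifPn => [/set_mem/F0 //|_]; exact: measure0.
Qed.

End measure_facts.

Lemma measurable_preimageT {d d'} {T : measurableType d} {U : measurableType d'}
    {f : T -> U} {Y : set U} :
  measurable_fun setT f -> measurable Y -> measurable (f @^-1` Y).
Proof. by move=> mf mY; rewrite -[f @^-1` Y]setTI; exact: mf. Qed.

Lemma coupling_transfer (R : realType) (d : nat) (mu nu : set (Borel R d) -> \bar R)
    (pi : probability (Borel R d * Borel R d)%type R) (B G M : set (Borel R d))
    (D : set (Borel R d * Borel R d)) :
  coupling mu nu pi -> measurable B -> measurable G -> measurable M -> measurable D ->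
  nu M = 0 -> B `*` setT `<=` (setT `*` G) `|` D `|` (setT `*` M) ->
  (mu B <= nu G + pi D)%E.
Proof.
move=> [pi1 pi2] mB mG mM mD nuM cover.
have mTG : measurable (setT `*` G : set (Borel R d * Borel R d)) by exact: measurableX.
have mTM : measurable (setT `*` M : set (Borel R d * Borel R d)) by exact: measurableX.
rewrite -pi1 // -pi2 // -[leRHS]adde0 -nuM -pi2 //.
apply: le_trans (le_measure _ _ _ cover) _; rewrite ?inE.
- exact: measurableX.
- by apply: measurableU => //; exact: measurableU.
apply: le_trans (measureU2 _ _ _) _ => //; first exact: measurableU.
by apply: leeD2r; exact: measureU2.
Qed.
Arguments coupling_transfer {R d mu nu pi B G M D}.

Section norm_on_rV.
Context {R : realType} {d : nat} {nrm : 'rV[R]_d -> R}.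
Hypothesis nrm_norm : is_norm nrm.

Lemma nrm0 : nrm 0 = 0.
Proof. by case: nrm_norm => _ nrmZ _; rewrite -(scale0r 0) nrmZ normr0 mul0r. Qed.

Lemma nrmN x : nrm (- x) = nrm x.
Proof. by case: nrm_norm => _ nrmZ _; rewrite -scaleN1r nrmZ normrN normr1 mul1r. Qed.

Lemma nrm_triangle x y : nrm (x + y) <= nrm x + nrm y.
Proof. by case: nrm_norm. Qed.

Lemma nrm_ge0 x : 0 <= nrm x.
Proof.
have := nrm_triangle x (- x); rewrite subrr nrm0 nrmN.
by rewrite -mulr2n pmulrn_lge0.
Qed.

Lemma nrm_distC x y : nrm (x - y) = nrm (y - x).
Proof. by rewrite -nrmN opprB. Qed.

Lemma nrm_dist_triangle x y z : nrm (x - z) <= nrm (x - y) + nrm (y - z).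
Proof. by rewrite -[x - z](subrKA y) nrm_triangle. Qed.

Lemma nrm_le_mx_norm : exists2 C : R, 0 < C & forall v, nrm v <= C * `|v|.
Proof.
exists (1 + \sum_(j < d) nrm (delta_mx 0 j)) => [|v].
  by rewrite ltr_pwDl // sumr_ge0 // => j _; exact: nrm_ge0.
rewrite mulrDl mul1r (ler_wpDl (normr_ge0 v)) // {1}(matrix_sum_delta v) big_ord1.
rewrite mulr_suml; elim/big_rec2: _ => [|j a b _ le_ab]; first by rewrite nrm0.
apply: le_trans (nrm_triangle _ _) (lerD _ le_ab).
case: nrm_norm => _ nrmZ _; rewrite nrmZ mulrC ler_wpM2l ?nrm_ge0 //.
change (`|v 0 j| <= mx_norm v); rewrite mx_normrE.
exact: (le_bigmax _ (fun ij : 'I_1 * 'I_d => `|v ij.1 ij.2|) (0, j)).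
Qed.

Lemma open_nrm_ball (q : 'rV[R]_d) (c : R) : open [set v | nrm (v - q) < c].
Proof.
have [C C0 leC] := nrm_le_mx_norm; rewrite openE => x /= xq.
apply/nbhs_ballP; exists ((c - nrm (x - q)) / C) => [|y].
  by apply: divr_gt0; rewrite ?subr_gt0.
rewrite -ball_normE /= distrC ltr_pdivlMr // => xy.
by have := nrm_dist_triangle y x q; have := leC (y - x); lra.
Qed.

Lemma rat_approx z e : 0 < e -> exists q : 'rV[rat]_d, nrm (z - map_mx ratr q) < e.
Proof.
have [C C0 leC] := nrm_le_mx_norm; move=> e0; have eC0 : 0 < e / C by rewrite divr_gt0.
have /choice[t zt] : forall j : 'I_d, exists t : rat, `|z 0 j - ratr t| < e / C.
  move=> j; have [t] := @rat_in_itvoo R (z 0 j - e / C) (z 0 j + e / C) ltac:(lra).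
  by rewrite in_itv /= -ltr_distlC => ?; exists t.
exists (\row_j t j); apply: le_lt_trans (leC _) _; rewrite mulrC -ltr_pdivlMr //.
change (mx_norm (z - map_mx ratr (\row_j t j)) < e / C); rewrite mx_normrE.
by apply: bigmax_lt => // -[i j] _ /=; rewrite !mxE ord1.
Qed.

Definition rball (q : 'rV[rat]_d) (s : rat) : set 'rV[R]_d :=
  [set v | nrm (v - map_mx ratr q) < ratr s].

Lemma rball_separates v u r : nrm (v - u) < r ->
  exists q s, rball q s u /\ nrm (v - map_mx ratr q) < r - ratr s.
Proof.
move=> vu; have [q uq] := rat_approx u ((r - nrm (v - u)) / 2) ltac:(lra).
have [s] := @rat_in_itvoo R (nrm (u - map_mx ratr q))
  (r - nrm (v - u) - nrm (u - map_mx ratr q)) ltac:(lra).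
rewrite in_itv /= => /andP[us sr]; exists q, s; split => //.
by have := nrm_dist_triangle v u (map_mx ratr q); lra.
Qed.

(* Being open in R^d x R^d does not give measurability for the product sigma-algebra;
   separability does, by writing the complement as a countable union of rectangles. *)
Lemma measurable_nrm_far r :
  measurable [set z : Borel R d * Borel R d | r <= nrm (z.1 - z.2)].
Proof.
have -> : [set z : Borel R d * Borel R d | r <= nrm (z.1 - z.2)] =
    ~` \bigcup_(p : 'rV[rat]_d * rat)
       ([set v | nrm (v - map_mx ratr p.1) < r - ratr p.2] `*` rball p.1 p.2).
  apply/seteqP; split => z /=.
    move=> far [[q s] _ [/= zq zs]].
    have := nrm_dist_triangle z.1 (map_mx ratr q) z.2.
    rewrite /rball /= nrm_distC in zs; lra.
  move=> near; rewrite leNgt; apply/negP => /rball_separates[q [s [zs zq]]].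
  by apply: near; exists (q, s).
apply/measurableC/countable_bigcupT_measurable => [|p]; first exact: countableP.
by apply: measurableX; apply: sub_sigma_algebra; exact: open_nrm_ball.
Qed.

Lemma measurable_rball q s : measurable (rball q s : set (Borel R d)).
Proof. by apply: sub_sigma_algebra; exact: open_nrm_ball. Qed.

Lemma wasserstein_far_mass {mu nu : set (Borel R d) -> \bar R} {c r e : R} :
  0 < r -> 0 < e -> (wasserstein nrm mu nu <= c%:E)%E ->
  exists2 pi, coupling mu nu pi &
    (pi [set z | r <= nrm (z.1 - z.2)]%R <= (c / r + e)%:E)%E.
Proof.
move=> r0 e0 Wc.
have /ereal_inf_lt[_ [pi cpl <-] lt_int] : (wasserstein nrm mu nu < (c + e * r)%:E)%E.
  by apply: le_lt_trans Wc _; rewrite lte_fin ltrDl mulr_gt0.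
exists pi => //; have mfar := measurable_nrm_far r.
have := measure_le_integral_lbound pi _ r (fun z => nrm (z.1 - z.2)) mfar (ltW r0)
  (fun _ => nrm_ge0 _) (fun _ far => far).
move/le_lt_trans/(_ lt_int)/ltW => far_le.
have -> : c / r + e = r^-1 * (c + e * r) by field; rewrite gt_eqF.
by rewrite EFinM lee_pdivlMl.
Qed.

End norm_on_rV.
Arguments rball {R d} nrm q s.

Section safe_centers.
Context {R : realType} {d : nat} {nrm : 'rV[R]_d -> R}.
Hypothesis nrm_norm : is_norm nrm.
Context {dO : measure_display} {Omega : measurableType dO} {P : probability Omega R}.
Context {X : Omega -> 'rV[R]_d} {G : set (Borel R d)} {r : R}.
Hypotheses (mX : measurable_fun setT (X : Omega -> Borel R d)) (mG : measurable G).

Definition null_rball (p : 'rV[rat]_d * rat) : Prop :=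
  law P X (rball nrm p.1 p.2 `\` G) = 0%E.

(* A closed substitute for the possibly non-Borel set of centers whose closed r-ball
   lies in G: every rational ball inside the open r-ball lies in G up to a null set
   for the law of X. *)
Definition safe_center : set 'rV[R]_d :=
  [set v | forall p, ~ null_rball p -> r - ratr p.2 <= nrm (v - map_mx ratr p.1)].

Definition exceptional_set : set 'rV[R]_d :=
  \bigcup_(p in null_rball) (rball nrm p.1 p.2 `\` G).

Lemma measurable_safe_center : measurable (safe_center : set (Borel R d)).
Proof.
have -> : safe_center = ~` \bigcup_(p in ~` null_rball)
    [set v | nrm (v - map_mx ratr p.1) < r - ratr p.2].
  apply/seteqP; split => v; first by move=> safe [p bad]; rewrite /= ltNge safe.
  by move=> far p bad; rewrite leNgt; apply/negP => near; apply: far; exists p.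
apply: measurableC; apply: sub_sigma_algebra; apply: bigcup_open => p _.
exact: (open_nrm_ball nrm_norm).
Qed.

Lemma measurable_exceptional_set : measurable (exceptional_set : set (Borel R d)).
Proof.
rewrite /exceptional_set bigcup_mkcond.
apply: countable_bigcupT_measurable => [|p]; first exact: countableP.
by case: ifP => // _; apply: measurableD => //; exact: (measurable_rball nrm_norm).
Qed.

Lemma law_exceptional_set : law P X exceptional_set = 0%E.
Proof.
rewrite /law preimage_bigcup; apply: countable_bigcup_measure0 => // p.
exact: (measurable_preimageT mX (measurableD (measurable_rball nrm_norm _ _) mG)).
Qed.

Lemma safe_center_cover : safe_center `*` setT `<=`
  (setT `*` G) `|` [set z | r <= nrm (z.1 - z.2)] `|` (setT `*` exceptional_set).
Proof.
move=> [v u] [/= safe _].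
have [Gu|nGu] := pselect (G u); first by left; left.
have [far|] := leP r (nrm (v - u)); first by left; right.
move=> /(rball_separates nrm_norm)[q [s [uqs near]]]; right; split => //.
exists (q, s) => //; apply: contrapT => bad.
by have := safe (q, s) bad; rewrite leNgt near.
Qed.

Lemma safe_center_of_ball_sub {Xi : set 'rV[R]_d} {v} :
  (forall w, Xi (X w)) -> (forall u, Xi u -> nrm (u - v) <= r -> G u) ->
  safe_center v.
Proof.
move=> XiX ball_sub [q s] /= bad; rewrite leNgt; apply/negP => near; apply: bad.
rewrite /null_rball /law (_ : X @^-1` _ = set0) ?measure0 //.
apply/seteqP; split => // w [/= wqs]; apply; apply: ball_sub (XiX w) _.
have := nrm_dist_triangle nrm_norm (X w) (map_mx ratr q) v.
rewrite (nrm_distC nrm_norm (map_mx ratr q) v).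
by move: wqs near; rewrite /rball /=; lra.
Qed.

End safe_centers.
Arguments null_rball {R d} nrm {dO Omega} P X G p.
Arguments safe_center {R d} nrm {dO Omega} P X G r.
Arguments exceptional_set {R d} nrm {dO Omega} P X G.

Theorem lemma1 (R : realType) (d n : nat) (Xi : set 'rV[R]_d)
  (nrm : 'rV[R]_d -> R)
  (dO : measure_display) (Omega : measurableType dO) (P : probability Omega R)
  (xi : nat -> Omega -> 'rV[R]_d)
  (rho : R -> R) (calX : set 'rV[R]_n) (g : 'rV[R]_n -> 'rV[R]_d -> R)
  (N : nat) (r : nat -> R) :
  is_polish Xi ->
  is_norm nrm ->
  (forall i, measurable_fun setT (xi i : Omega -> Borel R d)) ->
  (forall i, (0 < i)%N -> forall w, Xi (xi i w)) ->
  mutually_independent P xi ->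
  (forall t, 0 <= t -> 0 <= rho t) -> rho 0 = 0 ->
  (forall i k, (0 < i)%N ->
     (wasserstein nrm (law P (xi i)) (law P (xi (i + k)%N)) <= (rho k%:R)%:E)%E) ->
  (forall x, measurable_fun setT (g x : Borel R d -> R)) ->
  (0 < N)%N ->
  (forall i, (0 < i <= N)%N -> 0 < r i) ->
  forall x, calX x -> forall i, (0 < i <= N)%N ->
    measurable [set w | forall u, Xi u -> nrm (u - xi i w) <= r i -> g x u <= 0] ->
    (P [set w | (forall u, Xi u -> nrm (u - xi i w) <= r i -> g x u <= 0)%R]
      <= P [set w | (g x (xi N.+1 w) <= 0)%R] + (rho (N.+1 - i)%:R / r i)%R%:E)%E.
Proof.
move=> _ nrm_norm mxi xi_Xi _ _ _ W_rho mg _ r_pos x _ i /andP[i_pos iN] mA.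
have ri_pos : 0 < r i by apply: r_pos; rewrite i_pos iN.
pose G : set (Borel R d) := [set u | g x u <= 0].
have mG : measurable G.
  by have := mg x measurableT _ (measurable_itv `]-oo, 0]); rewrite setTI.
pose B := safe_center nrm P (xi N.+1) G (r i).
have mB : measurable (B : set (Borel R d)) := measurable_safe_center nrm_norm.
apply: (@le_trans _ _ (law P (xi i) B)).
  apply: le_measure; rewrite ?inE //; first exact: measurable_preimageT (mxi i) mB.
  by move=> w Aw; apply: (safe_center_of_ball_sub nrm_norm (xi_Xi N.+1 isT)).
apply/lee_addgt0Pr => e e0.
have W := W_rho i (N.+1 - i)%N i_pos; rewrite subnKC ?leqW // in W.
have [pi cpl far_le] := wasserstein_far_mass nrm_norm ri_pos e0 W.
apply: le_trans (coupling_transfer cpl mB mG (measurable_exceptional_set nrm_norm mG)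
  (measurable_nrm_far nrm_norm (r i)) (law_exceptional_set nrm_norm (mxi N.+1) mG)
  (safe_center_cover nrm_norm)) _.
by rewrite -addeA -EFinD leeD2l.
Qed.
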